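(* Fix $\epsilon_2>0$ and $(u_\pm,v_\pm)$ with $v_\pm>0$ and $u_->u_++2\epsilon_2$, and let $v_*^{\epsilon_2}$ be the intermediate density of the two-shock Riemann solution (for small $\epsilon_1>0$). Then $$\lim_{\epsilon_1\to0}\sqrt{\epsilon_2^2+4\epsilon_1(v_*^{\epsilon_2}+v_-)^2}=\lim_{\epsilon_1\to0}\sqrt{\epsilon_2^2+4\epsilon_1(v_*^{\epsilon_2}+v_+)^2}=\frac{u_--u_+}{2}.$$
   Context: Perturbed Brio system: $u_t+(\tfrac12u^2+\tfrac12\epsilon_1v^2)_x=0$, $v_t+(uv-\epsilon_2v)_x=0$, $\epsilon_1,\epsilon_2>0$, $v>0$. The two-shock intermediate state $(u_*,v_* )$ satisfies $v_*>\max(v_-,v_+)$, $u_+<u_*<u_-$, $$u_*=u_-+(v_*-v_-)\frac{\epsilon_2-\sqrt{\epsilon_2^2+4\epsilon_1(v_*+v_-)^2}}{v_*+v_-},\qquad u_+=u_*+(v_+-v_* )\frac{\epsilon_2+\sqrt{\epsilon_2^2+4\epsilon_1(v_*+v_+)^2}}{v_*+v_+}.$$ *)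

From Stdlib Require Import Reals Lra.
Open Scope R_scope.

(* (us, vs) is the intermediate state of the two-shock Riemann solution of the
   perturbed Brio system with parameters eps1, eps2, connecting the left state
   (um, vm) = (u_-, v_-) to the right state (up, vp) = (u_+, v_+). *)
Definition two_shock_state (eps1 eps2 um vm up vp us vs : R) : Prop :=
  Rmax vm vp < vs /\ up < us < um /\
  us = um + (vs - vm) * (eps2 - sqrt (eps2 ^ 2 + 4 * eps1 * (vs + vm) ^ 2)) / (vs + vm) /\
  up = us + (vp - vs) * (eps2 + sqrt (eps2 ^ 2 + 4 * eps1 * (vs + vp) ^ 2)) / (vs + vp).

From Stdlib Require Import Reals Lra.
Open Scope R_scope.

(* Write a, b for the square roots attached to v_- and v_+ and D = u_- - u_+.  Eliminating
   u_* gives D = (v_*-v_-)/(v_*+v_-) (a - eps2) + (v_*-v_+)/(v_*+v_+) (b + eps2) <= a + b.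
   If v_* stayed bounded as eps1 -> 0, then a, b -> eps2 and D <= 2 eps2, contradicting the
   hypothesis; hence v_* -> oo.  Then both ratios are 1 - O(1/v_* ), so a + b = D + O(1/v_* ),
   while (b - a)(a + b) = b^2 - a^2 = O(eps1 v_* ) with eps1 v_*^2 <= a^2/4 bounded, so
   b - a = O(1/v_* ). *)

Definition wave_root (e1 e2 vs v : R) : R := sqrt (e2 ^ 2 + 4 * e1 * (vs + v) ^ 2).

Section WaveRoot.
Variables (e1 e2 vs v : R).
Hypotheses (e1_ge0 : 0 <= e1) (e2_ge0 : 0 <= e2).

Lemma wave_root_sqr : wave_root e1 e2 vs v ^ 2 = e2 ^ 2 + 4 * e1 * (vs + v) ^ 2.
Proof.
  unfold wave_root; apply pow2_sqrt.
  pose proof (pow2_ge_0 e2); pose proof (pow2_ge_0 (vs + v)); nra.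
Qed.

Lemma wave_root_ge : e2 <= wave_root e1 e2 vs v.
Proof.
  rewrite <- (sqrt_pow2 e2) at 1 by exact e2_ge0.
  apply sqrt_le_1_alt; pose proof (pow2_ge_0 (vs + v)); nra.
Qed.

Lemma wave_root_excess : (wave_root e1 e2 vs v - e2) * (2 * e2) <= 4 * e1 * (vs + v) ^ 2.
Proof.
  pose proof wave_root_sqr as Hsqr; pose proof wave_root_ge as Hge.
  set (r := wave_root e1 e2 vs v) in *.
  assert ((r - e2) * (2 * e2) <= (r - e2) * (r + e2)) by nra.
  nra.
Qed.

End WaveRoot.

Lemma two_shock_jump e1 e2 um vm up vp us vs :
  0 < vm -> 0 < vp -> two_shock_state e1 e2 um vm up vp us vs ->
  vm < vs /\ vp < vs /\
  um - up = (vs - vm) / (vs + vm) * (wave_root e1 e2 vs vm - e2)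
          + (vs - vp) / (vs + vp) * (wave_root e1 e2 vs vp + e2).
Proof.
  intros Hvm Hvp [Hmax [_ [Hus Hup]]].
  pose proof (Rmax_l vm vp); pose proof (Rmax_r vm vp).
  split; [lra | split; [lra |]].
  unfold wave_root; rewrite Hup, Hus; field; lra.
Qed.

Lemma shock_ratio_bounds v vs : 0 < v -> v < vs ->
  0 <= (vs - v) / (vs + v) <= 1 /\ (1 - (vs - v) / (vs + v)) * vs <= 2 * v.
Proof.
  intros Hv Hvs.
  assert (E : (vs - v) / (vs + v) * (vs + v) = vs - v) by (field; lra).
  set (r := (vs - v) / (vs + v)) in *.
  repeat split; nra.
Qed.

Lemma shock_ratio_ge_half v vs : 0 < v -> 3 * v <= vs -> 1 / 2 <= (vs - v) / (vs + v).
Proof.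
  intros Hv Hvs.
  assert (E : (vs - v) / (vs + v) * (vs + v) = vs - v) by (field; lra).
  nra.
Qed.

Definition half_jump_error (e2 vm vp D : R) : R :=
  2 * (vm + vp) * D + 3 * (vm + vp) * (2 * D + e2) ^ 2 / (4 * e2).

Section JumpBounds.
Variables (e1 e2 vm vp vs D : R).
Hypotheses (e1_gt0 : 0 < e1) (e2_gt0 : 0 < e2) (vm_gt0 : 0 < vm) (vp_gt0 : 0 < vp)
  (vm_lt_vs : vm < vs) (vp_lt_vs : vp < vs).
Hypothesis jumpE : D = (vs - vm) / (vs + vm) * (wave_root e1 e2 vs vm - e2)
                     + (vs - vp) / (vs + vp) * (wave_root e1 e2 vs vp + e2).

Lemma jump_le_wave_roots : D <= wave_root e1 e2 vs vm + wave_root e1 e2 vs vp.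
Proof.
  pose proof (wave_root_ge e1 e2 vs vm ltac:(lra) ltac:(lra)).
  pose proof (wave_root_ge e1 e2 vs vp ltac:(lra) ltac:(lra)).
  destruct (shock_ratio_bounds vm vs) as [[] _]; try lra.
  destruct (shock_ratio_bounds vp vs) as [[] _]; try lra.
  nra.
Qed.

Lemma lt_vs_of_small_eps M :
  2 * e1 * ((M + vm) ^ 2 + (M + vp) ^ 2) < (D - 2 * e2) * e2 -> M < vs.
Proof.
  intros Hsmall.
  destruct (Rlt_or_le M vs) as [|Hle]; [assumption | exfalso].
  pose proof jump_le_wave_roots.
  pose proof (wave_root_excess e1 e2 vs vm ltac:(lra) ltac:(lra)).
  pose proof (wave_root_excess e1 e2 vs vp ltac:(lra) ltac:(lra)).
  assert ((vs + vm) ^ 2 <= (M + vm) ^ 2) by (simpl; nra).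
  assert ((vs + vp) ^ 2 <= (M + vp) ^ 2) by (simpl; nra).
  nra.
Qed.

Hypothesis vs_large : 3 * (vm + vp) <= vs.

Lemma wave_root_le_jump : wave_root e1 e2 vs vm <= 2 * D + e2.
Proof.
  pose proof (wave_root_ge e1 e2 vs vm ltac:(lra) ltac:(lra)).
  pose proof (wave_root_ge e1 e2 vs vp ltac:(lra) ltac:(lra)).
  pose proof (shock_ratio_ge_half vm vs ltac:(lra) ltac:(lra)).
  destruct (shock_ratio_bounds vp vs) as [[] _]; try lra.
  nra.
Qed.

Lemma wave_roots_sum_defect :
  0 <= wave_root e1 e2 vs vm + wave_root e1 e2 vs vp - D /\
  (wave_root e1 e2 vs vm + wave_root e1 e2 vs vp - D) * vs <= 4 * (vm + vp) * D.
Proof.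
  pose proof (wave_root_ge e1 e2 vs vm ltac:(lra) ltac:(lra)).
  pose proof (wave_root_ge e1 e2 vs vp ltac:(lra) ltac:(lra)).
  pose proof (shock_ratio_ge_half vm vs ltac:(lra) ltac:(lra)).
  pose proof (shock_ratio_ge_half vp vs ltac:(lra) ltac:(lra)).
  destruct (shock_ratio_bounds vm vs) as [[] ?]; try lra.
  destruct (shock_ratio_bounds vp vs) as [[] ?]; try lra.
  set (a := wave_root e1 e2 vs vm) in *; set (b := wave_root e1 e2 vs vp) in *.
  set (rm := (vs - vm) / (vs + vm)) in *; set (rp := (vs - vp) / (vs + vp)) in *.
  assert (Ha : a - e2 <= 2 * D) by nra.
  assert (Hb : b + e2 <= 2 * D) by nra.
  assert (E : a + b - D = (1 - rm) * (a - e2) + (1 - rp) * (b + e2)) by lra.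
  rewrite E; split; nra.
Qed.

Lemma wave_roots_diff :
  Rabs (wave_root e1 e2 vs vp - wave_root e1 e2 vs vm) * vs
  <= 3 * (vm + vp) * (2 * D + e2) ^ 2 / (2 * e2).
Proof.
  pose proof (wave_root_sqr e1 e2 vs vm ltac:(lra)) as Sa.
  pose proof (wave_root_sqr e1 e2 vs vp ltac:(lra)) as Sb.
  pose proof (wave_root_ge e1 e2 vs vm ltac:(lra) ltac:(lra)).
  pose proof (wave_root_ge e1 e2 vs vp ltac:(lra) ltac:(lra)).
  pose proof wave_root_le_jump.
  set (a := wave_root e1 e2 vs vm) in *; set (b := wave_root e1 e2 vs vp) in *.
  set (A := 2 * D + e2) in *.
  assert (Hdiff : (b - a) * (a + b) = 4 * e1 * (vp - vm) * (2 * vs + vm + vp)).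
  { simpl in Sa, Sb; nra. }
  assert (Hprod : Rabs (b - a) * (a + b) <= 4 * e1 * (vm + vp) * (2 * vs + vm + vp)).
  { rewrite <- (Rabs_pos_eq (a + b)) by lra; rewrite <- Rabs_mult, Hdiff.
    assert (0 <= e1 * vm * (2 * vs + vm + vp)) by (apply Rmult_le_pos; nra).
    assert (0 <= e1 * vp * (2 * vs + vm + vp)) by (apply Rmult_le_pos; nra).
    apply Rabs_le; split; nra. }
  assert (Hdom : 4 * e1 * (vs + vm) ^ 2 <= A ^ 2).
  { assert (a * a <= A * A) by nra.
    pose proof (pow2_ge_0 e2); simpl in Sa |- *; lra. }
  assert (Hgrowth : 4 * e1 * (vm + vp) * (2 * vs + vm + vp) * vs <= 3 * (vm + vp) * A ^ 2).
  { assert (Hq : (2 * vs + vm + vp) * vs <= 3 * (vs + vm) ^ 2) by (simpl; nra).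
    assert (4 * e1 * ((2 * vs + vm + vp) * vs) <= 4 * e1 * (3 * (vs + vm) ^ 2))
      by (apply Rmult_le_compat_l; lra).
    assert (0 <= vm + vp) by lra.
    nra. }
  apply (Rmult_le_reg_r (2 * e2)); [lra |].
  replace (3 * (vm + vp) * A ^ 2 / (2 * e2) * (2 * e2)) with (3 * (vm + vp) * A ^ 2)
    by (field; lra).
  pose proof (Rabs_pos (b - a)).
  assert (Rabs (b - a) * (2 * e2) <= Rabs (b - a) * (a + b)) by nra.
  nra.
Qed.

Lemma wave_roots_near_half_jump :
  Rabs (wave_root e1 e2 vs vm - D / 2) * vs <= half_jump_error e2 vm vp D /\
  Rabs (wave_root e1 e2 vs vp - D / 2) * vs <= half_jump_error e2 vm vp D.
Proof.
  destruct wave_roots_sum_defect as [Xge0 Xle].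
  pose proof wave_roots_diff as Yle.
  unfold half_jump_error.
  set (a := wave_root e1 e2 vs vm) in *; set (b := wave_root e1 e2 vs vp) in *.
  replace (3 * (vm + vp) * (2 * D + e2) ^ 2 / (4 * e2))
    with (3 * (vm + vp) * (2 * D + e2) ^ 2 / (2 * e2) / 2) by (field; lra).
  assert (Hhalf : forall c, Rabs (c - D / 2) <= (a + b - D) / 2 + Rabs (b - a) / 2 ->
            Rabs (c - D / 2) * vs <= 2 * (vm + vp) * D
                                     + 3 * (vm + vp) * (2 * D + e2) ^ 2 / (2 * e2) / 2).
  { intros c Hc.
    apply (Rmult_le_compat_r vs) in Hc; [lra | lra]. }
  pose proof (Rle_abs (b - a)); pose proof (Rle_abs (a - b)); pose proof (Rabs_minus_sym a b).
  split; apply Hhalf, Rabs_le; lra.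
Qed.

End JumpBounds.

Section SmallEps1Limit.
Variables (eps2 um vm up vp delta : R) (ustar vstar : R -> R).
Hypotheses (eps2_gt0 : 0 < eps2) (vm_gt0 : 0 < vm) (vp_gt0 : 0 < vp)
  (jump_gt : um > up + 2 * eps2).
Hypothesis states : forall eps1, 0 < eps1 < delta ->
  two_shock_state eps1 eps2 um vm up vp (ustar eps1) (vstar eps1).

Lemma intermediate_density_unbounded M : 0 <= M ->
  exists alp, 0 < alp /\ forall e1, 0 < e1 < delta -> e1 < alp -> M < vstar e1.
Proof.
  intros HM.
  set (Q := 2 * ((M + vm) ^ 2 + (M + vp) ^ 2)).
  assert (HQ : 0 < Q) by (unfold Q; simpl; nra).
  exists ((um - up - 2 * eps2) * eps2 / Q); split.
  { apply Rdiv_lt_0_compat; nra. }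
  intros e1 He1 Halp.
  destruct (two_shock_jump _ _ _ _ _ _ _ _ vm_gt0 vp_gt0 (states e1 He1)) as [? [? HD]].
  assert (Hsmall : e1 * Q < (um - up - 2 * eps2) * eps2).
  { apply (Rmult_lt_compat_r Q) in Halp; [| exact HQ].
    unfold Rdiv in Halp; rewrite Rmult_assoc, Rinv_l in Halp by lra; lra. }
  apply (lt_vs_of_small_eps e1 eps2 vm vp _ (um - up)); try exact HD; unfold Q in Hsmall; lra.
Qed.

Lemma wave_roots_tend_to_half_jump eps : 0 < eps ->
  exists alp, 0 < alp /\ forall e1, 0 < e1 < delta -> e1 < alp ->
    Rabs (wave_root e1 eps2 (vstar e1) vm - (um - up) / 2) < eps /\
    Rabs (wave_root e1 eps2 (vstar e1) vp - (um - up) / 2) < eps.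
Proof.
  intros Heps.
  set (K := half_jump_error eps2 vm vp (um - up)).
  assert (HK : 0 <= K).
  { unfold K, half_jump_error.
    assert (0 <= 3 * (vm + vp) * (2 * (um - up) + eps2) ^ 2 / (4 * eps2)).
    { apply Rle_mult_inv_pos; [pose proof (pow2_ge_0 (2 * (um - up) + eps2)) |]; nra. }
    nra. }
  assert (HKe : 0 <= K / eps) by (apply Rle_mult_inv_pos; lra).
  destruct (intermediate_density_unbounded (3 * (vm + vp) + K / eps)) as [alp [Halp Hvs]];
    [lra |].
  exists alp; split; [exact Halp |].
  intros e1 He1 He1alp.
  specialize (Hvs e1 He1 He1alp).
  destruct (two_shock_jump _ _ _ _ _ _ _ _ vm_gt0 vp_gt0 (states e1 He1)) as [? [? HD]].
  destruct (wave_roots_near_half_jump e1 eps2 vm vp (vstar e1) (um - up))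
    as [Ha Hb]; try exact HD; try lra.
  fold K in Ha, Hb.
  assert (HKvs : K < eps * vstar e1).
  { replace K with (eps * (K / eps)) by (field; lra). apply Rmult_lt_compat_l; lra. }
  split; [apply (Rmult_lt_reg_r (vstar e1)) | apply (Rmult_lt_reg_r (vstar e1))]; lra.
Qed.

End SmallEps1Limit.

Lemma limit1_in_right_of_0 (f : R -> R) (delta l : R) :
  (forall eps, 0 < eps ->
     exists alp, 0 < alp /\ forall x, 0 < x < delta -> x < alp -> Rabs (f x - l) < eps) ->
  limit1_in f (fun x => 0 < x < delta) l 0.
Proof.
  intros Hf eps Heps.
  destruct (Hf eps Heps) as [alp [Halp Hx]].
  exists alp; split; [exact Halp |].
  intros x [Hdom Hdist]; simpl in *; unfold R_dist in *.
  rewrite Rminus_0_r, Rabs_pos_eq in Hdist by lra.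
  exact (Hx x Hdom Hdist).
Qed.

Theorem lemma6p2 (eps2 um vm up vp : R) (ustar vstar : R -> R) (delta : R) :
  0 < eps2 -> 0 < vm -> 0 < vp -> um > up + 2 * eps2 ->
  0 < delta ->
  (forall eps1, 0 < eps1 < delta ->
     two_shock_state eps1 eps2 um vm up vp (ustar eps1) (vstar eps1)) ->
  limit1_in (fun eps1 => sqrt (eps2 ^ 2 + 4 * eps1 * (vstar eps1 + vm) ^ 2))
            (fun eps1 => 0 < eps1 < delta) ((um - up) / 2) 0 /\
  limit1_in (fun eps1 => sqrt (eps2 ^ 2 + 4 * eps1 * (vstar eps1 + vp) ^ 2))
            (fun eps1 => 0 < eps1 < delta) ((um - up) / 2) 0.
Proof.
  intros Heps2 Hvm Hvp Hjump _ Hstates.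
  pose proof (wave_roots_tend_to_half_jump eps2 um vm up vp delta ustar vstar
                Heps2 Hvm Hvp Hjump Hstates) as Hlim.
  split; apply limit1_in_right_of_0; intros eps Heps;
    destruct (Hlim eps Heps) as [alp [Halp Hclose]]; exists alp; split; trivial;
    intros x Hx Hxa; apply (Hclose x Hx Hxa).
Qed.
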